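(* Let $\mathcal{H}$ be a Hilbert space, $\Lambda$ an index set, $q=\{q_{\alpha\beta}\in\mathbb{T}:\alpha\ne\beta\in\Lambda\}$ with $q_{\alpha\beta}=q_{\beta\alpha}^{-1}$, and $\{V_\alpha:\alpha\in\Lambda\}$ a family of isometries on $\mathcal{H}$ with $V_\alpha V_\beta=q_{\alpha\beta}V_\beta V_\alpha$ for all $\alpha\ne\beta$. Then there exist a Hilbert space $\mathcal{K}\supseteq\mathcal{H}$ and unitaries $\{U_\alpha:\alpha\in\Lambda\}$ on $\mathcal{K}$ with $U_\alpha U_\beta=q_{\alpha\beta}U_\beta U_\alpha$ for all $\alpha\ne\beta$ such that $V_\alpha=U_\alpha|_{\mathcal{H}}$ for every $\alpha\in\Lambda$. *)

From HB Require Import structures.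
From mathcomp Require Import all_boot all_order all_algebra.
From mathcomp Require Import complex.
From mathcomp Require Import reals.
Set Implicit Arguments. Unset Strict Implicit. Unset Printing Implicit Defensive.
Import Order.TTheory GRing.Theory Num.Theory.
Local Open Scope ring_scope.
Local Open Scope complex_scope.

(* Cauchy / convergence are
   expressed with the squared norm <x,x>, which is equivalent. *)
Record HilbertSpace (R : realType) := {
  hcarrier :> lmodType R[i];
  hip : hcarrier -> hcarrier -> R[i];
  hip_linear : forall (a : R[i]) (x y z : hcarrier),
      hip (a *: x + y) z = a * hip x z + hip y z;
  hip_conj : forall x y : hcarrier, hip x y = (hip y x)^*;
  hip_ge0 : forall x : hcarrier, 0 <= hip x x;
  hip_eq0 : forall x : hcarrier, hip x x = 0 -> x = 0;
  hcomplete : forall u : nat -> hcarrier,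
      (forall e : R, 0 < e -> exists N : nat, forall m n : nat,
          (N <= m)%N -> (N <= n)%N -> `|hip (u m - u n) (u m - u n)| < e%:C) ->
      exists l : hcarrier, forall e : R, 0 < e -> exists N : nat, forall n : nat,
          (N <= n)%N -> `|hip (u n - l) (u n - l)| < e%:C
}.

Definition lin_map (R : realType) (H K : HilbertSpace R) (f : H -> K) : Prop :=
  forall (a : R[i]) (x y : H), f (a *: x + y) = a *: f x + f y.

Definition lin_isometry (R : realType) (H K : HilbertSpace R) (f : H -> K) : Prop :=
  lin_map f /\ forall x : H, hip (f x) (f x) = hip x x.

Definition isometry_on (R : realType) (H : HilbertSpace R) (V : H -> H) : Prop :=
  lin_isometry V.

Definition unitary_on (R : realType) (H : HilbertSpace R) (U : H -> H) : Prop :=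
  lin_isometry U /\ forall y : H, exists x : H, U x = y.

From HB Require Import structures.
From mathcomp Require Import all_boot all_order all_algebra.
From mathcomp Require Import complex reals boolp classical_sets functions.
From mathcomp Require Import ring lra.
Import Order.TTheory GRing.Theory Num.Theory.

(* The dilation space consists of the bounded families x = (x_w) of vectors of H,
   indexed by finite words w over Lambda, with x_(u a b v) = q_ab x_(u b a v) and
   x_w = V_a^* x_(a w).  Along such a family |x_w| grows when a letter is prepended
   and, the q_ab being unimodular, is invariant under rotation of w; hence
   sup_w |x_w|^2 is nearly attained on every word containing a suitable factor.  This
   sup is a squared norm whose polarization is an inner product, and the space is
   complete because uniform limits of such families are again such families.  The
   vector h embeds as (V_w h)_w, and U_a x := (x_(w a))_w is an isometry that extends
   V_a and satisfies U_a U_b = q_ab U_b U_a; it is onto because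
   x_w := phase * V_a^* y_w solves U_a x = y.  The adjoint V_a^* exists because the
   range of an isometry is complete, so every vector has a best approximation in it. *)

Set Implicit Arguments. Unset Strict Implicit. Unset Printing Implicit Defensive.
Local Open Scope ring_scope.
Local Open Scope complex_scope.
(* Real and imaginary parts in [R]; the ['Re] of the numClosedFieldType [R[i]] is
   complex-valued. *)
Local Notation Re := (@complex.Re _).
Local Notation Im := (@complex.Im _).

Section RealFacts.
Variable R : realFieldType.

Lemma le0_if_le_mul_eps (x k : R) : (forall e, 0 < e -> x <= k * e) -> x <= 0.
Proof.
move=> small; have [k_le0 | k_gt0] := lerP k 0.
  by apply: le_trans (small 1 ltr01) _; rewrite mulr1.
apply/ler_addgt0Pr => e e_gt0; rewrite add0r.
by have := small (e / k) (divr_gt0 e_gt0 k_gt0); rewrite mulrC divfK ?gt_eqF.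
Qed.

Lemma eq0_if_le_quadratic (c n : R) : 0 <= n ->
  (forall t, 2 * (t * c) <= t ^+ 2 * n) -> c = 0.
Proof.
move=> n_ge0 le_quad; pose t := c / (n + 1).
have ct : c = t * (n + 1) by rewrite /t divfK //; lra.
have := le_quad t; rewrite -subr_ge0 {1}ct.
have -> : t ^+ 2 * n - 2 * (t * (t * (n + 1))) = - (t ^+ 2 * (n + 2)) by ring.
rewrite oppr_ge0 pmulr_lle0; last by lra.
move=> t2_le0; have /eqP : t ^+ 2 = 0 by apply/le_anti; rewrite t2_le0 sqr_ge0.
by rewrite sqrf_eq0 ct => /eqP ->; rewrite mul0r.
Qed.

Lemma inv_succ_le (m n : nat) : (m <= n)%N -> n.+1%:R^-1 <= m.+1%:R^-1 :> R.
Proof. by move=> le_mn; rewrite lef_pV2 ?posrE ?ltr0n // ler_nat ltnS. Qed.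

End RealFacts.

Section ComplexFacts.
Variable R : rcfType.
Implicit Types (a b z : R[i]) (r : R).

Lemma ReM a b : Re (a * b) = Re a * Re b - Im a * Im b.
Proof. by case: a => ? ?; case: b. Qed.
Lemma ImM a b : Im (a * b) = Re a * Im b + Im a * Re b.
Proof. by case: a => ? ?; case: b. Qed.
Lemma ReJ a : Re (conjc a) = Re a. Proof. by case: a => ? ?. Qed.
Lemma ImJ a : Im (conjc a) = - Im a. Proof. by case: a => ? ?. Qed.

(* Conjugation is written [conjc], as in [hip_conj]: the [^*] notation and the
   generic [rmorph] lemmas may produce other forms, which [rewrite] does not match. *)
Lemma conjcD a b : conjc (a + b) = conjc a + conjc b. Proof. exact: rmorphD. Qed.
Lemma conjcN a : conjc (- a) = - conjc a. Proof. exact: rmorphN. Qed.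
Lemma conjcM a b : conjc (a * b) = conjc a * conjc b. Proof. exact: rmorphM. Qed.

Lemma complex_ext a b : Re a = Re b -> Im a = Im b -> a = b.
Proof. by case: a => ? ?; case: b => ? ? /= -> ->. Qed.

Lemma mulcJ_norm1 a : `|a| = 1 -> a * conjc a = 1.
Proof. by move=> a1; rewrite -sqr_normc a1 expr1n. Qed.

Lemma Re_mulcJ_ge0 a : 0 <= Re (a * conjc a).
Proof. by have := mulcJ_ge0 a; rewrite lecE => /andP[]. Qed.

Lemma normc_real_lt r e : 0 <= r -> (`|r%:C| < e%:C) = (r < e).
Proof. by move=> r_ge0; rewrite ger0_norm ?ler0c // ltcR. Qed.

Definition normL1 z : R := `|Re z| + `|Im z|.

Lemma normL1_ge0 z : 0 <= normL1 z.
Proof. by rewrite addr_ge0. Qed.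

Lemma normL1D a b : normL1 (a + b) <= normL1 a + normL1 b.
Proof.
rewrite /normL1 !raddfD /=.
have := ler_normD (Re a) (Re b); have := ler_normD (Im a) (Im b); lra.
Qed.

Lemma normL1N z : normL1 (- z) = normL1 z.
Proof. by rewrite /normL1 !raddfN /= !normrN. Qed.

Lemma normL1J z : normL1 (conjc z) = normL1 z.
Proof. by rewrite /normL1 ReJ ImJ normrN. Qed.

Lemma normL1M a b : normL1 (a * b) <= normL1 a * normL1 b.
Proof.
rewrite /normL1 ReM ImM.
have := ler_normB (Re a * Re b) (Im a * Im b).
have := ler_normD (Re a * Im b) (Im a * Re b).
rewrite !normrM; nra.
Qed.

Lemma normL1_close_eq a b (k : R) :
  (forall e, 0 < e -> normL1 (a - b) <= k * e) -> a = b.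
Proof.
move=> /le0_if_le_mul_eps; rewrite /normL1 => ab_le0.
apply/eqP; rewrite -subr_eq0; apply/eqP; set z := a - b.
by apply: complex_ext => /=; apply/normr0_eq0/le_anti;
  rewrite normr_ge0 andbT; move: ab_le0; have := normr_ge0 (Re z);
  have := normr_ge0 (Im z); lra.
Qed.

End ComplexFacts.

Section InnerProduct.
Variable R : realType.
Variable H : HilbertSpace R.
Implicit Types (x y z : H) (a : R[i]) (t : R).
Local Notation ip := (@hip R H).

Lemma hipDl x y z : ip (x + y) z = ip x z + ip y z.
Proof. by rewrite -[x in LHS]scale1r hip_linear mul1r. Qed.

Lemma hip0l z : ip 0 z = 0.
Proof. by apply: (addrI (ip 0 z)); rewrite -hipDl !addr0. Qed.

Lemma hipZl a x z : ip (a *: x) z = a * ip x z.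
Proof. by rewrite -[a *: x]addr0 hip_linear hip0l addr0. Qed.

Lemma hipNl x z : ip (- x) z = - ip x z.
Proof. by rewrite -scaleN1r hipZl mulN1r. Qed.

Lemma hipBl x y z : ip (x - y) z = ip x z - ip y z.
Proof. by rewrite hipDl hipNl. Qed.

Lemma hipDr x y z : ip z (x + y) = ip z x + ip z y.
Proof. by rewrite hip_conj hipDl conjcD -!hip_conj. Qed.

Lemma hipZr a x z : ip z (a *: x) = conjc a * ip z x.
Proof. by rewrite hip_conj hipZl conjcM -hip_conj. Qed.

Lemma hipNr x z : ip z (- x) = - ip z x.
Proof. by rewrite hip_conj hipNl conjcN -hip_conj. Qed.

Lemma hip_ext x y : (forall h, ip x h = ip y h) -> x = y.
Proof.
by move=> eq_ip; apply/eqP; rewrite -subr_eq0; apply/eqP/hip_eq0; rewrite hipBl eq_ip subrr.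
Qed.

Definition nrm2 x : R := Re (ip x x).

Lemma hip_real x : ip x x = (nrm2 x)%:C.
Proof. by apply: complex_ext => //=; have := hip_ge0 x; rewrite lecE => /andP[/eqP]. Qed.

Lemma nrm2_ge0 x : 0 <= nrm2 x.
Proof. by have := hip_ge0 x; rewrite hip_real ler0c. Qed.

Lemma nrm2_eq0 x : nrm2 x = 0 -> x = 0.
Proof. by move=> x0; apply: hip_eq0; rewrite hip_real x0. Qed.

Lemma nrm2_0 : nrm2 0 = 0.
Proof. by rewrite /nrm2 hip0l. Qed.

Lemma nrm2D x y : nrm2 (x + y) = nrm2 x + nrm2 y + 2 * Re (ip x y).
Proof. by rewrite /nrm2 hipDl !hipDr !raddfD /= [ip y x]hip_conj ReJ; ring. Qed.

Lemma nrm2N x : nrm2 (- x) = nrm2 x.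
Proof. by rewrite /nrm2 hipNl hipNr opprK. Qed.

Lemma nrm2B x y : nrm2 (x - y) = nrm2 x + nrm2 y - 2 * Re (ip x y).
Proof. by rewrite nrm2D nrm2N hipNr raddfN /=; ring. Qed.

Lemma nrm2Z a x : nrm2 (a *: x) = Re (a * conjc a) * nrm2 x.
Proof. by rewrite /nrm2 hipZl hipZr mulrA hip_real ReM /= mulr0 subr0. Qed.

Lemma nrm2Z_norm1 a x : `|a| = 1 -> nrm2 (a *: x) = nrm2 x.
Proof. by move=> /mulcJ_norm1 a1; rewrite nrm2Z a1 mul1r. Qed.

Lemma nrm2Zr t x : nrm2 (t%:C *: x) = t ^+ 2 * nrm2 x.
Proof. by rewrite nrm2Z conjc_real ReM /= mulr0 subr0 expr2. Qed.

Lemma Re_hipZr t x y : Re (ip x (t%:C *: y)) = t * Re (ip x y).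
Proof. by rewrite hipZr conjc_real ReM /= mul0r subr0. Qed.

Lemma Re_hipir x y : Re (ip x ('i *: y)) = Im (ip x y).
Proof. by rewrite hipZr ReM /=; ring. Qed.

Lemma hip_polarization x y : ip x y =
  ((nrm2 (x + y) - nrm2 (x - y)) / 4) +i* ((nrm2 (x + 'i *: y) - nrm2 (x - 'i *: y)) / 4).
Proof. by apply: complex_ext => /=; rewrite nrm2D nrm2B ?Re_hipir; field. Qed.

Lemma parallelogram x y : nrm2 (x - y) + nrm2 (x + y) = 2 * nrm2 x + 2 * nrm2 y.
Proof. by rewrite nrm2B nrm2D; ring. Qed.

(* Young's inequality [2 Re <x, y> <= t |x|^2 + |y|^2 / t], from [0 <= |t x - y|^2]. *)
Lemma nrm2D_le t x y : 0 < t -> nrm2 (x + y) <= (1 + t) * nrm2 x + (1 + t^-1) * nrm2 y.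
Proof.
move=> t_gt0; have := nrm2_ge0 (t%:C *: x - y).
rewrite nrm2B nrm2Zr hipZl ReM /= mul0r subr0 nrm2D => young.
suff : 2 * Re (ip x y) <= t * nrm2 x + t^-1 * nrm2 y by lra.
rewrite -(ler_pM2l t_gt0) mulrDr !mulrA mulfV ?gt_eqF // mul1r -expr2.
move: young; set r := Re _; set nx := nrm2 x; set ny := nrm2 y; set t2 := t ^+ 2.
by rewrite [t * 2]mulrC -mulrA; lra.
Qed.

Lemma nrm2D_le2 x y : nrm2 (x + y) <= 2 * nrm2 x + 2 * nrm2 y.
Proof. by have := nrm2D_le x y ltr01; rewrite invr1. Qed.

End InnerProduct.

Section Convergence.
Variable R : realType.
Variable H : HilbertSpace R.
Implicit Types (s : nat -> H) (x y l : H).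

Definition converges s l :=
  forall e, 0 < e -> exists N, forall n, (N <= n)%N -> nrm2 (s n - l) < e.

Definition cauchy s := forall e, 0 < e ->
  exists N, forall m n, (N <= m)%N -> (N <= n)%N -> nrm2 (s m - s n) < e.

Lemma cauchy_converges s : cauchy s -> exists l, converges s l.
Proof.
move=> s_cauchy; have [|l s_l] := @hcomplete R H s.
  move=> e /s_cauchy[N s_N]; exists N => m n mN nN.
  by rewrite hip_real normc_real_lt ?nrm2_ge0 ?s_N.
exists l => e /s_l[N s_N]; exists N => n nN.
by have := s_N n nN; rewrite hip_real normc_real_lt ?nrm2_ge0.
Qed.

Lemma converges_unique s l1 l2 : converges s l1 -> converges s l2 -> l1 = l2.
Proof.
move=> s_l1 s_l2; apply/eqP; rewrite -subr_eq0; apply/eqP/nrm2_eq0/le_anti.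
rewrite nrm2_ge0 andbT -subr_le0 subr0; apply: (@le0_if_le_mul_eps _ _ 4) => e e_gt0.
have [N1 s_N1] := s_l1 e e_gt0; have [N2 s_N2] := s_l2 e e_gt0.
have := s_N1 _ (leq_maxl N1 N2); have := s_N2 _ (leq_maxr N1 N2).
have := nrm2D_le2 (- (s (maxn N1 N2) - l1)) (s (maxn N1 N2) - l2).
by rewrite nrm2N opprB addrA subrK; lra.
Qed.

Lemma converges_le s l c M N0 : converges s l ->
  (forall n, (N0 <= n)%N -> nrm2 (s n - c) <= M) -> nrm2 (l - c) <= M.
Proof.
move=> s_l bound; have M_ge0 : 0 <= M := le_trans (nrm2_ge0 _) (bound N0 (leqnn N0)).
have near t e : 0 < t -> 0 < e -> nrm2 (l - c) <= (1 + t) * M + (1 + t^-1) * e.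
  move=> t_gt0 /s_l[N s_N]; set n := maxn N0 N.
  have -> : l - c = (s n - c) + - (s n - l) by rewrite opprB [RHS]addrC addrA subrK.
  apply: le_trans (nrm2D_le _ _ t_gt0) _; rewrite nrm2N.
  have tV_gt0 : 0 < t^-1 by rewrite invr_gt0.
  apply: lerD; apply: ler_wpM2l; rewrite ?bound ?leq_maxl //; try lra.
  exact/ltW/s_N/leq_maxr.
rewrite -subr_le0; apply: (@le0_if_le_mul_eps _ _ M) => t t_gt0.
have : nrm2 (l - c) - (1 + t) * M <= 0.
  by apply: (@le0_if_le_mul_eps _ _ (1 + t^-1)) => e e_gt0; have := near t e t_gt0 e_gt0; lra.
lra.
Qed.

Lemma converges_contraction (f : H -> H) s l :
  (forall x y, nrm2 (f x - f y) <= nrm2 (x - y)) -> converges s l -> converges (f \o s) (f l).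
Proof.
by move=> f_contr s_l e /s_l[N s_N]; exists N => n nN; apply: le_lt_trans (f_contr _ _) (s_N n nN).
Qed.

Lemma cauchy_uniform_converges (I : Type) (u : nat -> I -> H) (l : I -> H) :
  (forall e, 0 < e -> exists N, forall m n i, (N <= m)%N -> (N <= n)%N ->
     nrm2 (u m i - u n i) < e) ->
  (forall i, converges (u ^~ i) (l i)) ->
  forall e, 0 < e -> exists N, forall n i, (N <= n)%N -> nrm2 (u n i - l i) <= e.
Proof.
move=> u_cauchy u_l e /u_cauchy[N u_N]; exists N => n i nN.
rewrite -nrm2N opprB; apply: (converges_le (u_l i) (N0 := N)) => m mN.
exact/ltW/u_N.
Qed.

End Convergence.

Section LinearMap.
Variable R : realType.
Variables H K : HilbertSpace R.
Variable f : H -> K.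
Hypothesis f_lin : lin_map f.

Lemma lin_mapD x y : f (x + y) = f x + f y.
Proof. by have := f_lin 1 x y; rewrite !scale1r. Qed.

Lemma lin_map0 : f 0 = 0.
Proof. by apply: (addrI (f 0)); rewrite -lin_mapD !addr0. Qed.

Lemma lin_mapZ a x : f (a *: x) = a *: f x.
Proof. by have := f_lin a x 0; rewrite !addr0 lin_map0 addr0. Qed.

Lemma lin_mapN x : f (- x) = - f x.
Proof. by rewrite -scaleN1r lin_mapZ scaleN1r. Qed.

Lemma lin_mapB x y : f (x - y) = f x - f y.
Proof. by rewrite lin_mapD lin_mapN. Qed.

End LinearMap.

Section Isometry.
Variable R : realType.
Variable H : HilbertSpace R.
Implicit Types (x y z l : H).
Local Notation ip := (@hip R H).
Variable V : H -> H.
Hypothesis hV : lin_isometry V.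
Let V_lin : lin_map V := proj1 hV.

Lemma nrm2_isometry x : nrm2 (V x) = nrm2 x.
Proof. by rewrite /nrm2 (proj2 hV). Qed.

Lemma hip_isometry x y : ip (V x) (V y) = ip x y.
Proof.
by rewrite !hip_polarization -!(lin_mapZ V_lin) -!(lin_mapD V_lin) -!(lin_mapB V_lin)
  !nrm2_isometry.
Qed.

Lemma near_minimizers_close y d x1 x2 e1 e2 : (forall x, d <= nrm2 (y - V x)) ->
  nrm2 (y - V x1) <= d + e1 -> nrm2 (y - V x2) <= d + e2 ->
  nrm2 (x1 - x2) <= 2 * e1 + 2 * e2.
Proof.
move=> d_le x1_near x2_near; pose h : R[i] := (2^-1)%:C.
have hh : h + h = 1 by apply: complex_ext => /=; [field | rewrite addr0].
have mid : (y - V x1) + (y - V x2) = (y - V (h *: (x1 + x2))) + (y - V (h *: (x1 + x2))).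
  rewrite (lin_mapZ V_lin) (lin_mapD V_lin) [LHS]addrACA [RHS]addrACA -!opprD.
  by rewrite -scalerDl hh scale1r.
rewrite -nrm2N opprB; have := parallelogram (y - V x1) (y - V x2).
have -> : y - V x1 - (y - V x2) = V (x2 - x1).
  by rewrite (lin_mapB V_lin) opprB addrC addrA subrK.
have := d_le (h *: (x1 + x2)); rewrite nrm2_isometry mid.
move: (y - V (h *: (x1 + x2))) => z; rewrite (nrm2D z z) hip_real /=; lra.
Qed.

Lemma isometry_best_approx y : exists l, forall x, nrm2 (y - V l) <= nrm2 (y - V x).
Proof.
pose E := range (fun x => nrm2 (y - V x)).
have E_inf : has_inf E.
  by split; [exists (nrm2 (y - V 0)), 0 | exists 0 => _ [x _ <-]; apply: nrm2_ge0].
have d_le x : inf E <= nrm2 (y - V x) by apply: (ge_inf E_inf.2); exists x.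
have approx n : exists x, nrm2 (y - V x) <= inf E + n.+1%:R^-1.
  have eps_gt0 : 0 < n.+1%:R^-1 :> R by rewrite invr_gt0.
  have [_ [x _ <-] /ltW] := inf_adherent eps_gt0 E_inf.
  by exists x.
have [xs xsP] := choice approx.
have [l xs_l] : exists l, converges xs l.
  apply: cauchy_converges => e e_gt0.
  have [N N_small] := ltr_add_invr (divr_gt0 e_gt0 (ltr0n R 4)); rewrite add0r in N_small.
  exists N => m n mN nN; apply: le_lt_trans (near_minimizers_close d_le (xsP m) (xsP n)) _.
  have := inv_succ_le R mN; have := inv_succ_le R nN; move: N_small.
  set a := m.+1%:R^-1; set b := n.+1%:R^-1; set c := N.+1%:R^-1; lra.
have Vxs_l : converges (fun n => y - V (xs n)) (y - V l).
  apply: (converges_contraction (f := fun x => y - V x)) xs_l => x1 x2.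
  by rewrite opprB addrC addrA subrK -(lin_mapB V_lin) nrm2_isometry -nrm2N opprB.
exists l => x; apply: le_trans (d_le x).
apply/ler_addgt0Pr => e /ltr_add_invr[N]; rewrite add0r => N_small.
rewrite -[y - V l]subr0; apply: (converges_le Vxs_l (N0 := N)) => n nN; rewrite subr0.
by apply: le_trans (xsP n) _; rewrite lerD2l; apply: le_trans (inv_succ_le R nN) (ltW N_small).
Qed.

Lemma best_approx_orthogonal y l : (forall x, nrm2 (y - V l) <= nrm2 (y - V x)) ->
  forall h, ip (y - V l) (V h) = 0.
Proof.
move=> l_min; set z := y - V l.
have Re0 h : Re (ip z (V h)) = 0.
  apply: (eq0_if_le_quadratic (nrm2_ge0 h)) => t; have := l_min (l + t%:C *: h).
  rewrite (lin_mapD V_lin) (lin_mapZ V_lin) opprD addrA -/z (nrm2B z) nrm2Zr nrm2_isometry.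
  by rewrite Re_hipZr; lra.
move=> h; apply: complex_ext; first exact: Re0.
by rewrite -Re_hipir -(lin_mapZ V_lin) Re0.
Qed.

Lemma adjoint_ex y : exists z, forall h, ip z h = ip y (V h).
Proof.
have [l l_min] := isometry_best_approx y; exists l => h.
by rewrite -[y](subrK (V l)) hipDl best_approx_orthogonal // add0r hip_isometry.
Qed.

Definition adjoint y : H := sval (cid (adjoint_ex y)).

Lemma adjointP y h : ip (adjoint y) h = ip y (V h).
Proof. exact: (svalP (cid (adjoint_ex y))). Qed.

Lemma adjoint_lin : lin_map adjoint.
Proof. by move=> a x y; apply: hip_ext => h; rewrite hipDl hipZl !adjointP hipDl hipZl. Qed.

Lemma adjointK x : adjoint (V x) = x.
Proof. by apply: hip_ext => h; rewrite adjointP hip_isometry. Qed.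

(* Pythagoras: [y - V (adjoint y)] is orthogonal to the range of [V]. *)
Lemma nrm2_adjoint_le y : nrm2 (adjoint y) <= nrm2 y.
Proof.
have orth : ip (y - V (adjoint y)) (V (adjoint y)) = 0.
  by rewrite hipBl hip_isometry adjointP subrr.
rewrite -[X in _ <= nrm2 X](subrK (V (adjoint y))) nrm2D orth /= mulr0 addr0 nrm2_isometry.
by rewrite lerDr nrm2_ge0.
Qed.

End Isometry.

Section AdjointCommutation.
Variable R : realType.
Variable H : HilbertSpace R.
Variables V W : H -> H.
Hypotheses (hV : lin_isometry V) (hW : lin_isometry W).

Lemma adjoint_qcommute c : (forall x, V (W x) = c *: W (V x)) ->
  forall y, adjoint hW (adjoint hV y) = conjc c *: adjoint hV (adjoint hW y).
Proof.
move=> VW y; apply: hip_ext => h.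
by rewrite hipZl (adjointP hW) (adjointP hV) VW hipZr (adjointP hV) (adjointP hW).
Qed.

End AdjointCommutation.

Section Eventually.
Variable L : Type.
Implicit Types P Q : seq L -> Prop.

Definition eventually P := exists w0, forall u v, P (u ++ w0 ++ v).

Lemma eventually_and P Q : eventually P -> eventually Q -> eventually (fun w => P w /\ Q w).
Proof.
move=> [w0 P_w0] [w1 Q_w1]; exists (w0 ++ w1) => u v; rewrite -catA; split.
  exact: P_w0.
by rewrite catA; apply: Q_w1.
Qed.

Lemma eventually_mono P Q : (forall w, P w -> Q w) -> eventually P -> eventually Q.
Proof. by move=> PQ [w0 P_w0]; exists w0 => u v; apply/PQ/P_w0. Qed.

Lemma eventually_ex P : eventually P -> exists w, P w.
Proof. by move=> [w0 P_w0]; exists ([::] ++ w0 ++ [::]). Qed.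

End Eventually.

Section Dilation.
Variable R : realType.
Variable H : HilbertSpace R.
Variable L : Type.
Variable q : L -> L -> R[i].
Hypothesis q_norm1 : forall a b, a <> b -> `|q a b| = 1.
Variable V : L -> H -> H.
Hypothesis hV : forall a, lin_isometry (V a).
Hypothesis hVq : forall a b, a <> b -> forall x, V a (V b x) = q a b *: V b (V a x).

Local Notation ip := (@hip R H).
Local Notation F := (seq L -> H).
Local Notation Vadj a := (adjoint (hV a)).
Implicit Types (a b : L) (u v w : seq L) (x y : F) (h : H).

Definition qext a b : R[i] := if pselect (a = b) then 1 else q a b.

Lemma qext_id a : qext a a = 1.
Proof. by rewrite /qext; case: (pselect (a = a)). Qed.

Lemma qext_norm1 a b : `|qext a b| = 1.
Proof.
by rewrite /qext; case: (pselect (a = b)) => /= [_|ab]; [exact: normr1 | exact: q_norm1].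
Qed.

Lemma Vqext a b h : V a (V b h) = qext a b *: V b (V a h).
Proof.
by rewrite /qext; case: (pselect (a = b)) => /= [->|ab]; [rewrite scale1r | exact: hVq].
Qed.

Definition phase a w : R[i] := \prod_(b <- w) qext a b.

Lemma phase_norm1 a w : `|phase a w| = 1.
Proof.
rewrite /phase; apply: (big_ind (fun z => `|z| = 1)) => [|z1 z2 z1_1 z2_1|b _].
- exact: normr1.
- by rewrite normrM z1_1 z2_1 mulr1.
- exact: qext_norm1.
Qed.

Lemma phase_swap a u v b c : phase a (u ++ b :: c :: v) = phase a (u ++ c :: b :: v).
Proof. by rewrite /phase !big_cat !big_cons /=; congr (_ * _); rewrite mulrCA. Qed.

Definition qsym x := forall u v a b, a <> b ->
  x (u ++ a :: b :: v) = q a b *: x (u ++ b :: a :: v).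
Definition coherent x := forall w a, x w = Vadj a (x (a :: w)).
Definition bounded x := exists M, forall w, nrm2 (x w) <= M.
Definition admissible x := [/\ qsym x, coherent x & bounded x].

Lemma qsym_qext x : qsym x ->
  forall u v a b, x (u ++ a :: b :: v) = qext a b *: x (u ++ b :: a :: v).
Proof.
move=> xq u v a b; rewrite /qext.
by case: (pselect (a = b)) => /= [->|ab]; [rewrite scale1r | exact: xq].
Qed.

Lemma qsym_move x : qsym x -> forall w u a, x (u ++ a :: w) = phase a w *: x (u ++ w ++ [:: a]).
Proof.
move=> xq; elim=> [|b w IH] u a; first by rewrite /phase big_nil scale1r.
by rewrite qsym_qext // -cat_rcons IH cat_rcons scalerA /phase big_cons.
Qed.

Lemma nrm2_rot x : qsym x -> forall u v, nrm2 (x (u ++ v)) = nrm2 (x (v ++ u)).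
Proof.
move=> xq; elim=> [|a u IH] v; first by rewrite cats0.
by rewrite (qsym_move xq _ [::]) nrm2Z_norm1 ?phase_norm1 //= -catA IH -catA.
Qed.

Lemma nrm2_cons_ge x : coherent x -> forall w a, nrm2 (x w) <= nrm2 (x (a :: w)).
Proof. by move=> xc w a; rewrite {1}(xc w a) nrm2_adjoint_le. Qed.

Lemma nrm2_infix_ge x : qsym x -> coherent x ->
  forall u w v, nrm2 (x w) <= nrm2 (x (u ++ w ++ v)).
Proof.
move=> xq xc u w v; rewrite catA nrm2_rot // catA.
by elim: (v ++ u) => [|a s IH] //=; apply: le_trans IH (nrm2_cons_ge xc _ _).
Qed.

Lemma admissible0 : admissible 0.
Proof.
split=> [u v a b _|w a|]; rewrite ?fctE ?scaler0 //.
  by rewrite (lin_map0 (adjoint_lin (hV a))).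
by exists 0 => w; rewrite nrm2_0.
Qed.

Lemma admissible_lin (c : R[i]) x y : admissible x -> admissible y -> admissible (c *: x + y).
Proof.
move=> [xq xc [Mx x_le]] [yq yc [My y_le]]; split.
- by move=> u v a b ab; rewrite !fctE xq // yq // scalerDr !scalerA mulrC.
- by move=> w a; rewrite !fctE (adjoint_lin (hV a)) -xc -yc.
exists (2 * Re (c * conjc c) * Mx + 2 * My) => w; rewrite !fctE.
apply: le_trans (nrm2D_le2 _ _) _; rewrite nrm2Z.
have := x_le w; have := y_le w; have := Re_mulcJ_ge0 c.
move: (Re _) => r; nra.
Qed.

Definition admissible_pred : {pred F} := fun x => `[< admissible x >].

Lemma admissible_submod_closed : submod_closed admissible_pred.
Proof.
split; first by apply/asboolP; apply: admissible0.
by move=> c x y /asboolP x_adm /asboolP y_adm; apply/asboolP; apply: admissible_lin.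
Qed.

HB.instance Definition _ :=
  GRing.isSubmodClosed.Build R[i] F admissible_pred admissible_submod_closed.

Inductive dilation := Dilation (x : F) of x \in admissible_pred.
Definition dval (x : dilation) : F := let: Dilation f _ := x in f.
Coercion dval : dilation >-> Funclass.
HB.instance Definition _ := [isSub for dval].
HB.instance Definition _ := [Choice of dilation by <:].
HB.instance Definition _ := [SubChoice_isSubZmodule of dilation by <:].
HB.instance Definition _ := [SubZmodule_isSubLmodule of dilation by <:].

Implicit Types (X Y Z : dilation).

Lemma dilation_admissible X : admissible X.
Proof. by case: X => x x_adm; apply/asboolP. Qed.

Lemma dilationD X Y w : (X + Y) w = X w + Y w.
Proof. by []. Qed.

Lemma dilationZ (c : R[i]) X w : (c *: X) w = c *: X w.
Proof. by []. Qed.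

Lemma dilationB X Y w : (X - Y) w = X w - Y w.
Proof. by []. Qed.

Definition dnrm2 X : R := sup (range (fun w => nrm2 (X w))).

Lemma dnrm2_has_sup X : has_sup (range (fun w => nrm2 (X w))).
Proof.
have [_ _ [M X_le]] := dilation_admissible X.
by split; [exists (nrm2 (X [::])), [::] | exists M => _ [w _ <-]].
Qed.

Lemma dnrm2_ge X w : nrm2 (X w) <= dnrm2 X.
Proof. by apply: sup_upper_bound (dnrm2_has_sup X) _ _; exists w. Qed.

Lemma dnrm2_ge0 X : 0 <= dnrm2 X.
Proof. exact: le_trans (nrm2_ge0 _) (dnrm2_ge X [::]). Qed.

Lemma dnrm2_le X M : (forall w, nrm2 (X w) <= M) -> dnrm2 X <= M.
Proof. by move=> X_le; apply: ge_sup; [exists (nrm2 (X [::])), [::] | move=> _ [w _ <-]]. Qed.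

Lemma eventually_near_dnrm2 X e : 0 < e -> eventually (fun w => dnrm2 X - e < nrm2 (X w)).
Proof.
move=> e_gt0; have [_ [w0 _ <-] w0_near] := sup_adherent e_gt0 (dnrm2_has_sup X).
have [Xq Xc _] := dilation_admissible X.
by exists w0 => u v; apply: lt_le_trans w0_near (nrm2_infix_ge Xq Xc u w0 v).
Qed.

Definition dip X Y : R[i] :=
  ((dnrm2 (X + Y) - dnrm2 (X - Y)) / 4) +i* ((dnrm2 (X + 'i *: Y) - dnrm2 (X - 'i *: Y)) / 4).

Lemma eventually_near_dip X Y e : 0 < e ->
  eventually (fun w => normL1 (dip X Y - ip (X w) (Y w)) <= e).
Proof.
move=> e_gt0; have near Z := eventually_near_dnrm2 Z e_gt0.
apply: eventually_mono (eventually_and (near (X + Y)) (eventually_and (near (X - Y))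
  (eventually_and (near (X + 'i *: Y)) (near (X - 'i *: Y))))).
move=> w [n1 [n2 [n3 n4]]]; move: n1 n2 n3 n4.
have := dnrm2_ge (X + Y) w; have := dnrm2_ge (X - Y) w.
have := dnrm2_ge (X + 'i *: Y) w; have := dnrm2_ge (X - 'i *: Y) w.
rewrite !dilationB !dilationD !dilationZ hip_polarization /normL1 !raddfB /=.
move: (dnrm2 _) (dnrm2 _) (dnrm2 _) (dnrm2 _) (nrm2 _) (nrm2 _) (nrm2 _) (nrm2 _).
move=> A B C D a b c d *.
apply: (@le_trans _ _ (e / 2 + e / 2)); last by lra.
by apply: lerD; rewrite ler_norml; apply/andP; split; lra.
Qed.

Lemma dip_linear (c : R[i]) X Y Z : dip (c *: X + Y) Z = c * dip X Z + dip Y Z.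
Proof.
apply: (normL1_close_eq (k := 2 + normL1 c)) => e e_gt0.
have near W := eventually_near_dip W Z e_gt0.
have [w [nXY [nX nY]]] := eventually_ex (eventually_and (near (c *: X + Y))
  (eventually_and (near X) (near Y))).
have -> : dip (c *: X + Y) Z - (c * dip X Z + dip Y Z) =
    (dip (c *: X + Y) Z - ip ((c *: X + Y) w) (Z w))
    - (c * (dip X Z - ip (X w) (Z w)) + (dip Y Z - ip (Y w) (Z w))).
  by rewrite dilationD dilationZ hip_linear; ring.
apply: le_trans (normL1D _ _) _; rewrite normL1N.
apply: le_trans (lerD (lexx _) (normL1D _ _)) _.
have := normL1M c (dip X Z - ip (X w) (Z w)); have := normL1_ge0 c.
move: (normL1 _) (normL1 _) (normL1 _) (normL1 (_ * _)) nXY nX nY => n1 n2 n3 n4.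
nra.
Qed.

Lemma dip_conj X Y : dip X Y = conjc (dip Y X).
Proof.
apply: (normL1_close_eq (k := 2)) => e e_gt0.
have [w [nXY nYX]] := eventually_ex (eventually_and (eventually_near_dip X Y e_gt0)
  (eventually_near_dip Y X e_gt0)).
have -> : dip X Y - conjc (dip Y X) =
    (dip X Y - ip (X w) (Y w)) - conjc (dip Y X - ip (Y w) (X w)).
  by rewrite conjcD conjcN -hip_conj; ring.
by apply: le_trans (normL1D _ _) _; rewrite normL1N normL1J; lra.
Qed.

Lemma dip_xx X : dip X X = (dnrm2 X)%:C.
Proof.
apply: (normL1_close_eq (k := 2)) => e e_gt0.
have [w [nXX nX]] := eventually_ex (eventually_and (eventually_near_dip X X e_gt0)
  (eventually_near_dnrm2 X e_gt0)).
have -> : dip X X - (dnrm2 X)%:C = (dip X X - ip (X w) (X w)) + (nrm2 (X w) - dnrm2 X)%:C.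
  by rewrite hip_real; apply: complex_ext; rewrite !(raddfD, raddfB) /=; ring.
apply: le_trans (normL1D _ _) _; rewrite /normL1 /= normr0 addr0.
have := dnrm2_ge X w; have := ler_norml (nrm2 (X w) - dnrm2 X) e.
move: nXX; rewrite /normL1; lra.
Qed.

Lemma dnrm2_eq0 X : dnrm2 X = 0 -> X = 0.
Proof.
move=> X0; apply: val_inj; apply: funext => w /=; apply: nrm2_eq0.
by apply/le_anti; rewrite nrm2_ge0 -X0 dnrm2_ge.
Qed.

Lemma admissible_limit (u : nat -> F) (l : F) : (forall n, admissible (u n)) ->
  (forall w, converges (u ^~ w) (l w)) ->
  (forall e, 0 < e -> exists N, forall n w, (N <= n)%N -> nrm2 (u n w - l w) <= e) ->
  admissible l.
Proof.
move=> u_adm u_l u_unif; split.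
- move=> w v a b ab; apply: (converges_unique (u_l _)).
  have -> : u ^~ (w ++ a :: b :: v) = (q a b *: id) \o u ^~ (w ++ b :: a :: v).
    by apply: funext => n /=; have [uq _ _] := u_adm n; rewrite uq.
  apply: converges_contraction (u_l _) => x y.
  by rewrite -scalerBr nrm2Z_norm1 // q_norm1.
- move=> w a; apply: (converges_unique (u_l _)).
  have -> : u ^~ w = Vadj a \o u ^~ (a :: w).
    by apply: funext => n /=; have [_ uc _] := u_adm n; rewrite -uc.
  apply: converges_contraction (u_l _) => x y.
  by rewrite -(lin_mapB (adjoint_lin (hV a))) nrm2_adjoint_le.
- have [N u_N] := u_unif 1 ltr01; have [_ _ [M uN_le]] := u_adm N.
  exists (2 * 1 + 2 * M) => w; rewrite -[l w](subrK (u N w)).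
  apply: le_trans (nrm2D_le2 _ _) _; apply: lerD; rewrite ler_pM2l //.
  by rewrite -nrm2N opprB u_N.
Qed.

Lemma dilation_complete (u : nat -> dilation) :
  (forall e, 0 < e -> exists N, forall m n, (N <= m)%N -> (N <= n)%N ->
     dnrm2 (u m - u n) < e) ->
  exists l : dilation, forall e, 0 < e -> exists N, forall n, (N <= n)%N ->
     dnrm2 (u n - l) < e.
Proof.
move=> u_cauchy.
have u_ucauchy e : 0 < e -> exists N, forall m n w, (N <= m)%N -> (N <= n)%N ->
    nrm2 (u m w - u n w) < e.
  move=> /u_cauchy[N u_N]; exists N => m n w mN nN.
  by rewrite -dilationB; apply: le_lt_trans (dnrm2_ge _ _) (u_N m n mN nN).
have u_cvg w : exists l, converges (u ^~ w) l.
  apply: cauchy_converges => e /u_ucauchy[N u_N]; exists N => m n; exact: u_N.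
have [l u_l] := choice u_cvg.
have u_unif := cauchy_uniform_converges u_ucauchy u_l.
have l_adm : l \in admissible_pred.
  by apply/asboolP; apply: admissible_limit u_l u_unif => n; apply: dilation_admissible.
exists (Dilation l_adm) => e e_gt0; have [N u_N] := u_unif (e / 2) (divr_gt0 e_gt0 (ltr0Sn _ 1)).
exists N => n nN; apply: le_lt_trans (_ : e / 2 < e); last by lra.
by apply: dnrm2_le => w; rewrite dilationB; apply: u_N.
Qed.

Lemma dip_ge0 X : 0 <= dip X X.
Proof. by rewrite dip_xx ler0c dnrm2_ge0. Qed.

Lemma dip_eq0 X : dip X X = 0 -> X = 0.
Proof. by rewrite dip_xx => /(congr1 (@complex.Re _)) /dnrm2_eq0. Qed.

Lemma dip_complete (u : nat -> dilation) :
  (forall e : R, 0 < e -> exists N : nat, forall m n : nat, (N <= m)%N -> (N <= n)%N ->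
     `|dip (u m - u n) (u m - u n)| < e%:C) ->
  exists l : dilation, forall e : R, 0 < e -> exists N : nat, forall n : nat, (N <= n)%N ->
     `|dip (u n - l) (u n - l)| < e%:C.
Proof.
move=> u_cauchy; have [|l u_l] := @dilation_complete u.
  move=> e /u_cauchy[N u_N]; exists N => m n mN nN.
  by have := u_N m n mN nN; rewrite dip_xx normc_real_lt ?dnrm2_ge0.
exists l => e /u_l[N u_N]; exists N => n nN.
by rewrite dip_xx normc_real_lt ?dnrm2_ge0 ?u_N.
Qed.

Definition dilation_space : HilbertSpace R :=
  Build_HilbertSpace dip_linear dip_conj dip_ge0 dip_eq0 dip_complete.

Definition shiftF a x : F := fun w => x (w ++ [:: a]).

Lemma shiftF_admissible a x : admissible x -> admissible (shiftF a x).
Proof.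
move=> [xq xc [M x_le]]; split.
- by move=> u v b c bc; rewrite /shiftF -!catA xq.
- by move=> w b; apply: xc.
- by exists M => w; apply: x_le.
Qed.

Definition shift a X : dilation :=
  Dilation (asboolT (shiftF_admissible a (dilation_admissible X))).

Lemma dnrm2_shift a X : dnrm2 (shift a X) = dnrm2 X.
Proof.
have [Xq Xc _] := dilation_admissible X.
apply/le_anti/andP; split; apply: dnrm2_le => w; first exact: (dnrm2_ge X (w ++ [:: a])).
apply: le_trans (nrm2_cons_ge Xc w a) _.
by rewrite -cat1s nrm2_rot //; apply: (dnrm2_ge (shift a X)).
Qed.

Lemma shift_isometry a : @lin_isometry R dilation_space dilation_space (shift a).
Proof. by split=> [c X Y|X]; [apply: val_inj | rewrite /= !dip_xx dnrm2_shift]. Qed.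

Lemma shift_qcommute a b : a <> b ->
  forall X, shift a (shift b X) = q a b *: shift b (shift a X).
Proof.
move=> ab X; apply: val_inj; apply: funext => w; rewrite [RHS]dilationZ /= /shiftF -!catA /=.
by have [Xq _ _] := dilation_admissible X; apply: Xq.
Qed.

Definition unshiftF a x : F := fun w => phase a w *: Vadj a (x w).

Lemma unshiftF_admissible a x : admissible x -> admissible (unshiftF a x).
Proof.
have Va_lin := adjoint_lin (hV a); move=> [xq xc [M x_le]]; split.
- move=> u v b c bc; rewrite /unshiftF xq // (lin_mapZ Va_lin) !scalerA phase_swap.
  by rewrite mulrC.
- move=> w b; rewrite /unshiftF (lin_mapZ (adjoint_lin (hV b))).
  rewrite (adjoint_qcommute (hV a) (hV b) (Vqext a b)) scalerA /phase big_cons -/(phase a w).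
  by rewrite mulrAC mulcJ_norm1 ?qext_norm1 // mul1r -xc.
- exists M => w; rewrite /unshiftF nrm2Z_norm1 ?phase_norm1 //.
  exact: le_trans (nrm2_adjoint_le _ _) (x_le w).
Qed.

Lemma shiftF_unshiftF a x : admissible x -> shiftF a (unshiftF a x) = x.
Proof.
move=> [xq xc _]; apply: funext => w; rewrite /shiftF /unshiftF.
have -> : x (w ++ [:: a]) = conjc (phase a w) *: x (a :: w).
  rewrite (qsym_move xq w [::] a) scalerA [conjc _ * _]mulrC.
  by rewrite mulcJ_norm1 ?phase_norm1 ?scale1r.
rewrite (lin_mapZ (adjoint_lin (hV a))) -xc scalerA /phase big_cat big_seq1 /= qext_id mulr1.
by rewrite -/(phase a w) mulcJ_norm1 ?phase_norm1 ?scale1r.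
Qed.

Lemma shift_surjective a Y : exists X, shift a X = Y.
Proof.
have Y_adm := dilation_admissible Y.
exists (Dilation (asboolT (unshiftF_admissible a Y_adm))).
by apply: val_inj; apply: shiftF_unshiftF.
Qed.

Lemma shift_unitary a : @unitary_on R dilation_space (shift a).
Proof. by split; [apply: shift_isometry | apply: shift_surjective]. Qed.

Lemma foldrV_lin w : lin_map (fun h => foldr V h w).
Proof. by elim: w => [|a w IH] c x y //=; rewrite IH (proj1 (hV a)). Qed.

Lemma nrm2_foldrV w h : nrm2 (foldr V h w) = nrm2 h.
Proof. by elim: w => [|a w IH] //=; rewrite nrm2_isometry. Qed.

Definition embedF h : F := fun w => foldr V h w.

Lemma embedF_admissible h : admissible (embedF h).
Proof.
split.
- by move=> u v a b ab; rewrite /embedF !foldr_cat /= hVq // (lin_mapZ (foldrV_lin u)).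
- by move=> w a; rewrite /embedF /= adjointK.
- by exists (nrm2 h) => w; rewrite /embedF nrm2_foldrV.
Qed.

Definition embed h : dilation := Dilation (asboolT (embedF_admissible h)).

Lemma dnrm2_embed h : dnrm2 (embed h) = nrm2 h.
Proof.
apply/le_anti/andP; split; last exact: (dnrm2_ge (embed h) [::]).
by apply: dnrm2_le => w; rewrite /= /embedF nrm2_foldrV.
Qed.

Lemma embed_isometry : @lin_isometry R H dilation_space embed.
Proof.
split=> [c x y|h]; last by rewrite /= dip_xx dnrm2_embed hip_real.
by apply: val_inj; apply: funext => w; rewrite /= /embedF (foldrV_lin w).
Qed.

Lemma shift_embed a h : shift a (embed h) = embed (V a h).
Proof. by apply: val_inj; apply: funext => w; rewrite /= /shiftF /embedF foldr_cat. Qed.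

End Dilation.

Theorem corollary5p4 (R : realType) (H : HilbertSpace R) (Lambda : Type)
  (q : Lambda -> Lambda -> R[i])
  (hq_T : forall a b : Lambda, a <> b -> `|q a b| = 1)
  (hq_inv : forall a b : Lambda, a <> b -> q a b = (q b a)^-1)
  (V : Lambda -> H -> H)
  (hV : forall a : Lambda, isometry_on (V a))
  (hVq : forall a b : Lambda, a <> b ->
           forall x : H, V a (V b x) = q a b *: V b (V a x)) :
  exists (K : HilbertSpace R) (J : H -> K) (U : Lambda -> K -> K),
    lin_isometry J /\
    (forall a : Lambda, unitary_on (U a)) /\
    (forall a b : Lambda, a <> b ->
       forall y : K, U a (U b y) = q a b *: U b (U a y)) /\
    (forall (a : Lambda) (x : H), U a (J x) = J (V a x)).
Proof.
exists (dilation_space hq_T hV), (embed hV hVq), (@shift _ _ _ q V hV).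
split; first exact: embed_isometry.
split; first exact: shift_unitary.
split; first exact: shift_qcommute.
exact: shift_embed.
Qed.
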